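(* Suppose $s \geq 2$, $a \geq 1$ with $at' \leq k_I-\delta$ and $t'(sk_I+a)+\delta-1 \leq q$. Then the linear code $\mathcal{C}^F$ over $\mathbb{F}_q$ with parity-check matrix $H^F$ (described in the context) is an optimal $\big(n_F=t'(sk_{I}+a+\delta-1),~k_F=st'k_I,~d_F=at'+\delta;~(r=sk_{I}+a,\delta)\big)$-LRC.
   Context: Let $q$ be a prime power and let $\delta\geq 2$, $t'\geq 1$, $s$, $a$, $k_I$ be positive integers; set $t=st'$, $r=sk_I+a$, $n_F=t'(r+\delta-1)$ and $k_F=tk_I$. Let $\alpha_{i,j}$ ($i\in[t]$, $j\in[k_I]$), $\beta_{i',j'}$ ($i'\in[t']$, $j'\in[a]$) and $\gamma_\ell$ ($\ell\in[\delta-1]$) be $tk_I+at'+\delta-1$ pairwise distinct elements of $\mathbb{F}_q$. For elements $x_1,\dots,x_n\in\mathbb{F}_q$, $V_k(x_1,\dots,x_n)$ denotes the $k\times n$ Vandermonde matrix whose $(u,v)$ entry is $x_v^{u-1}$. For $i\in[t']$ let $L_i$ be the ordered list of $r+\delta-1$ elements $\alpha_{s(i-1)+1,1},\dots,\alpha_{s(i-1)+1,k_I},\dots,\alpha_{si,1},\dots,\alpha_{si,k_I},\beta_{i,1},\dots,\beta_{i,a},\gamma_1,\dots,\gamma_{\delta-1}$. Let $A_i=V_{\delta-1}(L_i)\in\mathbb{F}_q^{(\delta-1)\times(r+\delta-1)}$, and let $B_i\in\mathbb{F}_q^{at'\times(r+\delta-1)}$ be the matrix whose rows are the entrywise powers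 of the list $L_i$ with exponents $\delta-1,\delta,\dots,at'+\delta-2$ (i.e., the row with exponent $e$ is $(y^{e})_{y\in L_i}$). Define $H^F$ as the block matrix with $A_1,\dots,A_{t'}$ placed block-diagonally in the top $t'(\delta-1)$ rows (zeros elsewhere) and the bottom block row $(B_1\;B_2\;\cdots\;B_{t'})$. An $(n,k,d;(r,\delta))$-LRC is a code of length $n$, dimension $k$, minimum distance $d$ in which each coordinate lies in a set $J$ of at most $r+\delta-1$ coordinates such that the restriction of the code to $J$ has minimum distance at least $\delta$; it is optimal if $d=n-k+1-(\lceil k/r\rceil-1)(\delta-1)$ (the Singleton-type bound). *)

From HB Require Import structures.
From mathcomp Require Import all_boot all_order all_algebra.
Set Implicit Arguments. Unset Strict Implicit. Unset Printing Implicit Defensive.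
Import GRing.Theory.
Local Open Scope ring_scope.

Section Defs.
Variable F : fieldType.

(* A linear code of length n is represented by a square matrix C whose row
   space is the code; codewords are the row vectors c with (c <= C)%MS. *)

Definition wt n (c : 'rV[F]_n) : nat := #|[set j : 'I_n | c ord0 j != 0]|.

Definition code_dim n (C : 'M[F]_n) : nat := \rank C.

Definition is_min_dist n (C : 'M[F]_n) (d : nat) : Prop :=
  (exists c : 'rV[F]_n, (c <= C)%MS /\ c != 0 /\ wt c = d) /\
  (forall c : 'rV[F]_n, (c <= C)%MS -> c != 0 -> (d <= wt c)%N).

(* (r,delta)-locality: every coordinate lies in a set J of at most r+delta-1
   coordinates such that the restriction C|_J has minimum distance >= delta,
   i.e. every codeword whose restriction to J is nonzero has at least delta
   nonzero coordinates in J. *)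
Definition has_locality n (C : 'M[F]_n) (r delta : nat) : Prop :=
  forall j : 'I_n, exists J : {set 'I_n},
    [/\ j \in J, (#|J| <= r + delta.-1)%N &
        forall c : 'rV[F]_n, (c <= C)%MS -> [exists i in J, c ord0 i != 0%R] ->
          (delta <= #|[set i in J | c ord0 i != 0%R]|)%N].

Definition is_LRC n (C : 'M[F]_n) (k d r delta : nat) : Prop :=
  [/\ code_dim C = k, is_min_dist C d & has_locality C r delta].

(* Singleton-type bound value n - k + 1 - (ceil(k/r) - 1)(delta - 1), in int. *)
Definition singleton_LRC (n k r delta : nat) : int :=
  (n%:Z - k%:Z + 1 - (((k + r).-1 %/ r)%N%:Z - 1) * (delta%:Z - 1))%R.

Definition is_optimal_LRC n (C : 'M[F]_n) (k d r delta : nat) : Prop :=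
  is_LRC C k d r delta /\ d%:Z = singleton_LRC n k r delta.

(* extension of an ordinal-indexed family to nat indices (0 out of range;
   only used in range). *)
Definition ext1 m (f : 'I_m -> F) (x : nat) : F :=
  match (insub x : option 'I_m) with Some i => f i | None => 0 end.
Definition ext2 m n (f : 'I_m -> 'I_n -> F) (x y : nat) : F :=
  match (insub x : option 'I_m), (insub y : option 'I_n) with
  | Some i, Some j => f i j | _, _ => 0 end.

Variables (s t' a kI delta : nat).
Variables (alpha : 'I_(s * t') -> 'I_kI -> F) (beta : 'I_t' -> 'I_a -> F)
          (gamma : 'I_delta.-1 -> F).

Definition rloc : nat := (s * kI + a)%N.
Definition blen : nat := (rloc + delta.-1)%N.

(* All the evaluation points, as one family (for pairwise distinctness). *)
Definition all_points
  (x : ('I_(s * t') * 'I_kI + 'I_t' * 'I_a) + 'I_delta.-1) : F :=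
  match x with
  | inl (inl (i, j)) => alpha i j
  | inl (inr (i, j)) => beta i j
  | inr l => gamma l
  end.

(* L i p = the p-th entry (0-based) of the list L_{i+1} (0-based block i):
   alpha_{s i + 1, 1..kI}, ..., alpha_{s(i+1), 1..kI}, beta_{i+1,1..a},
   gamma_{1..delta-1}. *)
Definition Lpt (i p : nat) : F :=
  if (p < s * kI)%N then ext2 alpha (s * i + p %/ kI) (p %% kI)
  else if (p < rloc)%N then ext2 beta i (p - s * kI)
  else ext1 gamma (p - rloc).

(* Column g (0-based) of H^F belongs to block g %/ blen at position g %% blen. *)
(* Top block rows: block-diagonal A_i = V_{delta-1}(L_i). *)
Definition HF_top : 'M[F]_(t' * delta.-1, t' * blen) :=
  \matrix_(u < t' * delta.-1, g < t' * blen)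
    if (u %/ delta.-1 == g %/ blen)%N
    then Lpt (g %/ blen) (g %% blen) ^+ (u %% delta.-1) else 0.

(* Bottom block row (B_1 ... B_t'): exponents delta-1, ..., a t' + delta - 2. *)
Definition HF_bot : 'M[F]_(a * t', t' * blen) :=
  \matrix_(w < a * t', g < t' * blen)
    Lpt (g %/ blen) (g %% blen) ^+ (delta.-1 + w).

Definition HF : 'M[F]_(t' * delta.-1 + a * t', t' * blen) := col_mx HF_top HF_bot.

Definition CF : 'M[F]_(t' * blen) := kermx HF^T.

End Defs.

From Pilot Require Import Defs.
From HB Require Import structures.
From mathcomp Require Import all_boot all_order all_algebra.
From mathcomp Require Import zify.
Set Implicit Arguments. Unset Strict Implicit. Unset Printing Implicit Defensive.
Import GRing.Theory.
Local Open Scope ring_scope.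

(* Every row of H^F is a power-sum check [sum_g c_g x_g^e = 0] over the
   evaluation points x_g.  If the first m power sums of a vector supported on
   at most m positions vanish, the vector is zero at each position whose point
   occurs only once on the support: multiply by the polynomial with the other
   points of the support as roots.  Within a local group all r + delta - 1
   points are distinct and there are delta - 1 local checks, which gives
   locality delta.  Globally there are a t' + delta - 1 checks and only the
   gamma's repeat, so a nonzero codeword of weight < a t' + delta lives on
   gamma positions, hence on at most delta - 1 positions of one group, which
   locality forbids; a Vandermonde kernel vector on a t' + delta points of one
   group attains the bound.  The same polynomial argument shows that H^F has
   full row rank, so k = s t' k_I, and ceil(k / r) = t' turns the
   Singleton-type bound into a t' + delta. *)

Section PowerSums.
Variable F : fieldType.

Lemma sum_horner_eq0 (I : finType) (P : pred I) (c x : I -> F) m (f : {poly F}) :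
  (forall k, (k < m)%N -> \sum_(i | P i) c i * x i ^+ k = 0) -> (size f <= m)%N ->
  \sum_(i | P i) c i * f.[x i] = 0.
Proof.
move=> sums0 szf.
under eq_bigr do rewrite horner_coef big_distrr /=.
rewrite exchange_big big1 // => k _.
under eq_bigr do rewrite mulrCA.
by rewrite -big_distrr /= sums0 ?mulr0 // (leq_trans (ltn_ord k)).
Qed.

Lemma power_sums_vanish_at (I : finType) (P : pred I) (c x : I -> F) m i0 :
  (#|[set i | P i & c i != 0%R]| <= m)%N ->
  (forall k, (k < m)%N -> \sum_(i | P i) c i * x i ^+ k = 0) ->
  P i0 -> (forall i, P i -> c i != 0 -> x i = x i0 -> i = i0) ->
  c i0 = 0.
Proof.
move=> supp_le sums0 Pi0 sep; apply/eqP/contraT => ci0.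
set S := [set i | P i & c i != 0] in supp_le.
have Si0 : i0 \in S by rewrite inE Pi0.
pose f := \prod_(y <- [seq x i | i in S :\ i0]) ('X - y%:P).
have szf : size f = #|S| by rewrite size_prod_XsubC size_image (cardsD1 i0 S) Si0.
have := sum_horner_eq0 (f := f) sums0; rewrite szf => /(_ supp_le).
rewrite (bigD1 i0) //= big1 ?addr0 => [/eqP|i /andP[Pi ni0]].
  rewrite mulf_eq0 (negbTE ci0) /= -rootE root_prod_XsubC => /imageP[i].
  rewrite !inE => /andP[ni0 /andP[Pi ci]] /esym /(sep i Pi ci)/eqP.
  by rewrite (negbTE ni0).
have [->|ci] := eqVneq (c i) 0; first by rewrite mul0r.
suff /rootP -> : root f (x i) by rewrite mulr0.
by rewrite root_prod_XsubC; apply: image_f; rewrite !inE ni0 Pi.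
Qed.

Lemma power_sums_full_support (I : finType) (c x : I -> F) :
  injective x -> (forall k, (k < #|I|.-1)%N -> \sum_i c i * x i ^+ k = 0) ->
  (exists i, c i != 0) -> forall i, c i != 0.
Proof.
move=> xinj sums0 [i0 ci0] i1; apply/negP => /eqP ci1; case/negP: ci0; apply/eqP.
apply: (@power_sums_vanish_at I xpredT c x _ i0 _ sums0) => // [|i _ _ /xinj //].
rewrite -(cardC1 i1) /= subset_leq_card //; apply/subsetP => i.
by rewrite !inE; apply: contraNneq => ->; rewrite ci1.
Qed.

Lemma power_sums_kernel_full m (x : 'I_m -> F) : (0 < m)%N -> injective x ->
  exists v : 'I_m -> F,
    (forall k, (k < m.-1)%N -> \sum_i v i * x i ^+ k = 0) /\ forall i, v i != 0.
Proof.
move=> m_gt0 xinj; pose V := (Vandermonde m.-1 (\row_i x i))^T.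
have : kermx V != 0.
  rewrite kermx_eq0 -row_leq_rank -ltnNge (leq_ltn_trans (rank_leq_col _)) //.
  by rewrite prednK.
case/rowV0Pn => v /sub_kermxP /matrixP vV v_nz.
have v_sums k : (k < m.-1)%N -> \sum_i v 0 i * x i ^+ k = 0.
  move=> k_lt; have := vV 0 (Ordinal k_lt); rewrite !mxE => vVk.
  by rewrite -[RHS]vVk; apply: eq_bigr => i _; rewrite !mxE.
exists (v 0); split=> //; apply: power_sums_full_support xinj _ _.
  by rewrite card_ord.
by have [i vi] := rV0Pn _ v_nz; exists i.
Qed.

End PowerSums.

Lemma ext1E (F : fieldType) m (f : 'I_m -> F) x (hx : (x < m)%N) :
  ext1 f x = f (Ordinal hx).
Proof. by rewrite /ext1 insubT. Qed.

Lemma ext2E (F : fieldType) m n (f : 'I_m -> 'I_n -> F) x y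
    (hx : (x < m)%N) (hy : (y < n)%N) :
  ext2 f x y = f (Ordinal hx) (Ordinal hy).
Proof. by rewrite /ext2 !insubT. Qed.

Lemma ext1_ord (F : fieldType) m (f : 'I_m -> F) (i : 'I_m) : ext1 f i = f i.
Proof. by rewrite /ext1 valK. Qed.

Lemma ext1_out (F : fieldType) m (f : 'I_m -> F) x : (m <= x)%N -> ext1 f x = 0.
Proof. by move=> mx; rewrite /ext1 insubF // ltnNge mx. Qed.

Section Construction.
Variables (F : fieldType) (s t' a kI delta : nat).
Variables (alpha : 'I_(s * t') -> 'I_kI -> F) (beta : 'I_t' -> 'I_a -> F)
  (gamma : 'I_delta.-1 -> F).

Local Notation r := (rloc s a kI).
Local Notation bl := (blen s a kI delta).
Local Notation d1 := delta.-1.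
Local Notation m2 := (a * t')%N.
Local Notation N := (t' * bl)%N.
Local Notation L := (Lpt alpha beta gamma).
Local Notation blk g := (g %/ bl)%N.
Local Notation pos g := (g %% bl)%N.

(* The position and the group of an evaluation point in the lists L_i; the
   gamma's belong to every group, so their [point_block] is a dummy. *)
Definition point_pos (x : ('I_(s * t') * 'I_kI + 'I_t' * 'I_a) + 'I_d1) : nat :=
  match x with
  | inl (inl (X, Y)) => X %% s * kI + Y
  | inl (inr (_, Y)) => s * kI + Y
  | inr Y => r + Y
  end.

Definition point_block (x : ('I_(s * t') * 'I_kI + 'I_t' * 'I_a) + 'I_d1) : nat :=
  match x with
  | inl (inl (X, _)) => X %/ s
  | inl (inr (X, _)) => X
  | inr _ => 0
  end.

Lemma Lpt_point i p : (i < t')%N -> (p < bl)%N ->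
  exists x, [/\ L i p = all_points alpha beta gamma x, point_pos x = p &
                (p < r)%N -> point_block x = i].
Proof.
move=> ti pbl; rewrite /Lpt /point_pos /point_block /rloc.
case: ltnP => [p_alpha|p_ge].
  have kI_gt0 : (0 < kI)%N by case: kI p_alpha => //; rewrite muln0.
  have q_lt : (p %/ kI < s)%N by rewrite ltn_divLR // mulnC.
  have X_lt : (s * i + p %/ kI < s * t')%N by nia.
  have Y_lt : (p %% kI < kI)%N by rewrite ltn_pmod.
  exists (inl (inl (Ordinal X_lt, Ordinal Y_lt))); rewrite (ext2E _ X_lt Y_lt) /=.
  have s_gt0 : (0 < s)%N by case: s q_lt.
  split=> // [|_]; rewrite [(s * i)%N]mulnC.
    by rewrite modnMDl modn_small // -divn_eq.
  by rewrite divnMDl // divn_small // addn0.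
case: ltnP => [p_beta|p_gamma].
  have Y_lt : (p - s * kI < a)%N by lia.
  exists (inl (inr (Ordinal ti, Ordinal Y_lt))).
  by split=> //=; [rewrite (ext2E _ ti Y_lt) | rewrite subnKC].
have Y_lt : (p - (s * kI + a) < d1)%N by move: pbl; rewrite /blen /rloc; lia.
exists (inr (Ordinal Y_lt)).
by split=> //=; [rewrite (ext1E _ Y_lt) | rewrite subnKC].
Qed.

Hypothesis points_inj : injective (all_points alpha beta gamma).

Lemma Lpt_inj i i' p p' : (i < t')%N -> (i' < t')%N -> (p < bl)%N -> (p' < bl)%N ->
  L i p = L i' p' -> p = p' /\ ((p < r)%N -> i = i').
Proof.
move=> ti ti' pbl pbl'.
have [x [-> <- xi]] := Lpt_point ti pbl; have [x' [-> <- xi']] := Lpt_point ti' pbl'.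
by move/points_inj=> eqx; subst x'; split=> // lt; rewrite -(xi lt) -(xi' lt).
Qed.

Hypothesis d1_gt0 : (0 < d1)%N.

Lemma blen_gt0 : (0 < bl)%N.
Proof. by rewrite /blen addn_gt0 d1_gt0 orbT. Qed.

Definition col_point (g : 'I_N) : F := L (blk g) (pos g).

Lemma blk_lt (g : 'I_N) : (blk g < t')%N.
Proof. by rewrite ltn_divLR ?blen_gt0 // mulnC. Qed.

Lemma pos_lt (g : 'I_N) : (pos g < bl)%N.
Proof. by rewrite ltn_pmod ?blen_gt0. Qed.

Lemma blk_pos_inj (g g' : 'I_N) : blk g = blk g' -> pos g = pos g' -> g = g'.
Proof.
move=> eq_blk eq_pos; apply: val_inj.
by rewrite /= (divn_eq g bl) eq_blk eq_pos -divn_eq.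
Qed.

Lemma blk_pos_surj i p : (i < t')%N -> (p < bl)%N ->
  exists g : 'I_N, blk g = i /\ pos g = p.
Proof.
move=> ti pbl; have g_lt : (i * bl + p < N)%N by nia.
exists (Ordinal g_lt); rewrite /= divnMDl ?blen_gt0 // divn_small // addn0.
by rewrite modnMDl modn_small.
Qed.

Lemma col_point_inj (g g' : 'I_N) : col_point g = col_point g' ->
  pos g = pos g' /\ ((pos g < r)%N -> g = g').
Proof.
move/Lpt_inj => /(_ (blk_lt g) (blk_lt g') (pos_lt g) (pos_lt g')).
by case=> eq_pos eq_blk; split=> // /eq_blk/blk_pos_inj; apply.
Qed.

Lemma col_point_inj_blk (g g' : 'I_N) : blk g = blk g' -> col_point g = col_point g' -> g = g'.
Proof. by move=> eq_blk /col_point_inj[eq_pos _]; apply: blk_pos_inj. Qed.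

Local Notation Top := (HF_top alpha beta gamma).
Local Notation Bot := (HF_bot alpha beta gamma).
Local Notation CF := (CF alpha beta gamma).

Lemma sub_CF (c : 'rV[F]_N) : (c <= CF)%MS <-> c *m Top^T = 0 /\ c *m Bot^T = 0.
Proof.
rewrite /Defs.CF /HF tr_col_mx; split.
  by move/sub_kermxP; rewrite mul_mx_row -row_mx0 => /eq_row_mx.
by case=> cTop cBot; apply/sub_kermxP; rewrite mul_mx_row cTop cBot row_mx0.
Qed.

Lemma CF_block_sums (c : 'rV[F]_N) i e : (c <= CF)%MS -> (i < t')%N -> (e < d1)%N ->
  \sum_(g : 'I_N | blk g == i) c 0 g * col_point g ^+ e = 0.
Proof.
move=> cCF ti ed1; have u_lt : (i * d1 + e < t' * d1)%N by nia.
case/sub_CF: cCF => /matrixP/(_ 0 (Ordinal u_lt)) + _; rewrite !mxE => cTop.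
rewrite -[RHS]cTop big_mkcond; apply: eq_bigr => g _.
rewrite !mxE /= divnMDl // (divn_small ed1) addn0 modnMDl (modn_small ed1) eq_sym.
by case: eqP; rewrite ?mulr0.
Qed.

Lemma CF_sums (c : 'rV[F]_N) e : (c <= CF)%MS -> (e < m2 + d1)%N ->
  \sum_g c 0 g * col_point g ^+ e = 0.
Proof.
move=> cCF; case: (ltnP e d1) => [ed1 _ | d1e ebot].
  rewrite (partition_big (fun g => Ordinal (blk_lt g)) xpredT) //=.
  by apply: big1 => i _; rewrite -[RHS](CF_block_sums cCF (ltn_ord i) ed1).
have w_lt : (e - d1 < m2)%N by lia.
case/sub_CF: cCF => _ /matrixP/(_ 0 (Ordinal w_lt)); rewrite !mxE => cBot.
by rewrite -[RHS]cBot; apply: eq_bigr => g _; rewrite !mxE subnKC.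
Qed.

Lemma block0_sub_CF (c : 'rV[F]_N) : (forall g : 'I_N, (bl <= g)%N -> c 0 g = 0) ->
  (forall e, (e < m2 + d1)%N -> \sum_g c 0 g * col_point g ^+ e = 0) ->
  (c <= CF)%MS.
Proof.
move=> c_out sums0; apply/sub_CF; split; apply/rowP => u; rewrite !mxE; last first.
  by under eq_bigr do rewrite !mxE; apply: sums0; have := ltn_ord u; lia.
have [u_blk0 | u_blk] := eqVneq (u %/ d1)%N 0%N.
  rewrite -[RHS](sums0 (u %% d1)%N); last by have := ltn_pmod u d1_gt0; lia.
  apply: eq_bigr => g _; rewrite !mxE u_blk0.
  by case: (ltnP g bl) => [g_lt|/c_out->]; rewrite ?mul0r // /col_point (divn_small g_lt).
apply: big1 => g _; rewrite !mxE; case: eqP => [blk_eq|]; last by rewrite mulr0.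
case: (ltnP g bl) => [g_lt|/c_out->]; last by rewrite mul0r.
by move: u_blk; rewrite blk_eq divn_small ?eqxx.
Qed.

Local Notation HF := (HF alpha beta gamma).

Definition block_poly (z : 'rV[F]_(t' * d1)) (w : 'rV[F]_m2) (i : nat) : {poly F} :=
  \sum_(u : 'I_(t' * d1) | (u %/ d1 == i)%N) z 0 u *: 'X^(u %% d1)
  + \sum_(k < m2) w 0 k *: 'X^(d1 + k).

Lemma horner_block_poly z w (g : 'I_N) :
  (block_poly z w (blk g)).[col_point g] = (row_mx z w *m HF) 0 g.
Proof.
rewrite mul_row_col !mxE hornerD !horner_sum; congr (_ + _).
  rewrite big_mkcond; apply: eq_bigr => u _; rewrite !mxE hornerZ hornerXn.
  by case: eqP; rewrite ?mulr0.
by apply: eq_bigr => k _; rewrite !mxE hornerZ hornerXn.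
Qed.

Lemma coef_block_poly z w i n : (block_poly z w i)`_n =
  \sum_(u : 'I_(t' * d1) | ((u %/ d1 == i) && (n == u %% d1))%N) z 0 u
  + \sum_(k < m2 | (n == d1 + k)%N) w 0 k.
Proof.
rewrite coefD !coef_sum big_mkcondr [X in _ = _ + X]big_mkcond /=.
by congr (_ + _); apply: eq_bigr => j _;
  rewrite coefZ coefXn; case: eqP; rewrite ?mulr1 ?mulr0.
Qed.

Lemma size_block_poly z w i : (size (block_poly z w i) <= d1 + m2)%N.
Proof.
apply/leq_sizeP => n n_ge; rewrite coef_block_poly !big_pred0 ?addr0 // => j.
  by have := ltn_ord j; lia.
by have := ltn_pmod j d1_gt0; case: (n =P _) => [n_eq|]; rewrite ?andbF //; lia.
Qed.

Lemma coef_block_poly_top z w (u : 'I_(t' * d1)) :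
  (block_poly z w (u %/ d1))`_(u %% d1) = z 0 u.
Proof.
rewrite coef_block_poly (big_pred1 u) => [|u']; last first.
  rewrite /= eq_sym -val_eqE /=; apply/andP/eqP => [[/eqP eq_blk /eqP eq_pos]|->] //.
  by rewrite (divn_eq u' d1) -eq_blk -eq_pos -divn_eq.
rewrite big_pred0 ?addr0 // => k; apply/negbTE.
by have := ltn_pmod u d1_gt0; lia.
Qed.

Lemma coef_block_poly_bot z w i (k : 'I_m2) : (block_poly z w i)`_(d1 + k) = w 0 k.
Proof.
rewrite coef_block_poly (big_pred1 k) => [|k']; last by rewrite /= eqn_add2l eq_sym.
rewrite big_pred0 ?add0r // => u; apply/negbTE; rewrite negb_and orbC.
by have := ltn_pmod u d1_gt0; case: eqP; lia.
Qed.

Hypothesis m2_lt_skI : (m2 < s * kI)%N.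

Lemma block_poly_eq0 z w i : row_mx z w *m HF = 0 -> (i < t')%N -> block_poly z w i = 0.
Proof.
move=> zwHF ti; apply: (@roots_geq_poly_eq0 _ _ [seq L i p | p <- iota 0 bl]).
- apply/allP => x /mapP[p]; rewrite mem_iota => /andP[_ pbl] ->.
  have [g [<- <-]] := blk_pos_surj ti pbl.
  by apply/rootP; rewrite (horner_block_poly z w g) zwHF mxE.
- rewrite map_inj_in_uniq ?iota_uniq // => p p'.
  by rewrite !mem_iota => /andP[_ pbl] /andP[_ pbl'] /(Lpt_inj ti ti pbl pbl')[].
- rewrite size_map size_iota (leq_trans (size_block_poly z w i)) // /blen /rloc; lia.
Qed.

Hypothesis t'_gt0 : (0 < t')%N.

Lemma row_free_HF : row_free HF.
Proof.
rewrite -kermx_eq0; apply/rowV0P => v /sub_kermxP.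
rewrite -[v]hsubmxK; set z := lsubmx v; set w := rsubmx v => zwHF.
have blk0 i := block_poly_eq0 (i := i) zwHF.
suff [-> ->] : z = 0 /\ w = 0 by rewrite row_mx0.
split; apply/rowP => j; rewrite [RHS]mxE.
  by rewrite -(coef_block_poly_top z w) blk0 ?coef0 // ltn_divLR // mulnC.
by rewrite -(coef_block_poly_bot z w 0) blk0 ?coef0.
Qed.

Lemma rank_CF : \rank CF = (s * t' * kI)%N.
Proof. by rewrite /Defs.CF mxrank_ker mxrank_tr (eqP row_free_HF) /blen /rloc; nia. Qed.

Definition block i : {set 'I_N} := [set g : 'I_N | blk g == i].

Lemma card_block_le (S : {set 'I_N}) i (ps : seq nat) :
  {in S, forall g : 'I_N, blk g = i /\ pos g \in ps} -> (#|S| <= size ps)%N.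
Proof.
move=> inS; rewrite cardE -(size_map (fun g : 'I_N => pos g)) uniq_leq_size //.
  rewrite map_inj_in_uniq ?enum_uniq // => g g'; rewrite !mem_enum => gS g'S.
  by apply: blk_pos_inj; rewrite (inS g gS).1 (inS g' g'S).1.
by move=> x /mapP[g]; rewrite mem_enum => /inS[_ ?] ->.
Qed.

Lemma CF_block_weight (c : 'rV[F]_N) (g0 : 'I_N) : (c <= CF)%MS -> c 0 g0 != 0 ->
  (delta <= #|[set g in block (blk g0) | c ord0 g != 0%R]|)%N.
Proof.
move=> cCF cg0; rewrite leqNgt; apply: contra cg0 => light; apply/eqP.
apply: (power_sums_vanish_at (P := fun g : 'I_N => blk g == blk g0) (c := c 0)
  (x := col_point) (m := d1)) => //.
- rewrite -ltnS (_ : d1.+1 = delta); last by lia.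
  by apply: leq_trans light; apply/subset_leq_card/subsetP => g; rewrite !inE.
- by move=> e; apply: CF_block_sums cCF (blk_lt g0).
- by move=> g /eqP eq_blk _; apply: col_point_inj_blk.
Qed.

Lemma has_locality_CF : has_locality CF r delta.
Proof.
move=> j; exists (block (blk j)); split; first by rewrite inE.
  have := @card_block_le (block (blk j)) (blk j) (iota 0 bl).
  by rewrite size_iota; apply=> g; rewrite inE mem_iota pos_lt => /eqP.
move=> c cCF /existsP[g /andP[gJ cg]]; move: (CF_block_weight cCF cg).
by rewrite inE in gJ; rewrite (eqP gJ).
Qed.

Lemma CF_wt_ge (c : 'rV[F]_N) : (c <= CF)%MS -> c != 0 -> (m2 + delta <= wt c)%N.
Proof.
move=> cCF c_nz; rewrite leqNgt; apply/negP => light.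
have in_gamma g : c 0 g != 0 -> (r <= pos g)%N.
  move=> cg; rewrite leqNgt; apply: contra cg => g_lt; apply/eqP.
  apply: (power_sums_vanish_at (P := xpredT) (c := c 0) (x := col_point) (m := m2 + d1)).
  - rewrite -ltnS (_ : (m2 + d1).+1 = m2 + delta)%N; last by lia.
    by apply: leq_trans light; apply/subset_leq_card/subsetP => j; rewrite !inE.
  - by move=> e; apply: CF_sums.
  - by [].
  - by move=> g' _ _ /col_point_inj[eq_pos]; apply; rewrite eq_pos.
have [g0 cg0] := rV0Pn _ c_nz.
have := CF_block_weight cCF cg0; rewrite leqNgt => /negP; apply.
apply: (leq_ltn_trans (@card_block_le _ (blk g0) (iota r d1) _)).
  move=> g; rewrite !inE => /andP[/eqP eq_blk cg]; split=> //.
  by rewrite mem_iota in_gamma //=; have := pos_lt g; rewrite /blen; lia.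
by rewrite size_iota; lia.
Qed.

Lemma CF_wt_witness : exists c : 'rV[F]_N, [/\ (c <= CF)%MS, c != 0 & wt c = (m2 + delta)%N].
Proof.
pose m := (m2 + delta)%N.
have m_le_bl : (m <= bl)%N by rewrite /m /blen /rloc; lia.
have m_le_N : (m <= N)%N by rewrite (leq_trans m_le_bl) // leq_pmull.
have pts_inj : injective (fun p : 'I_m => L 0 p).
  move=> p p'; have p_lt q : (nat_of_ord q < bl)%N := leq_trans (ltn_ord q) m_le_bl.
  by case/(Lpt_inj t'_gt0 t'_gt0 (p_lt p) (p_lt p')) => /val_inj.
have [|v [v_sums v_full]] := power_sums_kernel_full _ pts_inj; first by rewrite /m; lia.
pose c := \row_(g < N) ext1 v g.
have c_out (g : 'I_N) : (m <= g)%N -> c 0 g = 0 by move=> m_le; rewrite mxE ext1_out.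
have c_widen (p : 'I_m) : c 0 (widen_ord m_le_N p) = v p by rewrite mxE ext1_ord.
exists c; split.
- apply: block0_sub_CF => [g /(leq_trans m_le_bl)/c_out // | e e_lt].
  rewrite (bigID (fun g : 'I_N => g < m)%N) /= [X in _ + X]big1 ?addr0 => [|g]; last first.
    by rewrite -leqNgt => /c_out ->; rewrite mul0r.
  rewrite -[RHS](v_sums e); last by rewrite /m; lia.
  under eq_bigr do rewrite mxE.
  rewrite -(big_ord_widen _ (fun k => ext1 v k * L (blk k) (pos k) ^+ e) m_le_N).
  apply: eq_bigr => p _; have p_lt : (p < bl)%N := leq_trans (ltn_ord p) m_le_bl.
  by rewrite ext1_ord divn_small // modn_small.
- apply/negP => /eqP c0; have p0_lt : (0 < m)%N by rewrite /m; lia.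
  by have := v_full (Ordinal p0_lt); rewrite -c_widen c0 mxE eqxx.
- rewrite /wt (_ : [set j | c 0 j != 0] = widen_ord m_le_N @: [set: 'I_m]).
    by rewrite card_imset ?cardsT ?card_ord // => p p' /(congr1 val)/= /val_inj.
  apply/setP => g; rewrite inE; apply/idP/imsetP => [|[p _ ->]]; last by rewrite c_widen.
  case: (ltnP g m) => [g_lt _|/c_out ->]; last by rewrite eqxx.
  by exists (Ordinal g_lt) => //; apply: val_inj.
Qed.

Lemma is_min_dist_CF : is_min_dist CF (m2 + delta).
Proof.
split; last by move=> c; apply: CF_wt_ge.
by have [c [cCF c_nz wt_c]] := CF_wt_witness; exists c.
Qed.

End Construction.

Lemma singleton_LRC_blocks t n k r delta :
  (0 < delta)%N -> ((t - 1) * r < k <= t * r)%N -> n = (t * (r + delta.-1))%N ->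
  singleton_LRC n k r delta = (t * r - k + delta)%N%:Z.
Proof.
move=> delta_gt0 /andP[k_gt k_le] ->.
have r_gt0 : (0 < r)%N by case: r k_gt k_le => // ; lia.
rewrite /singleton_LRC (_ : ((k + r).-1 %/ r)%N = t); first nia.
  apply/eqP; rewrite eqn_leq -ltnS ltn_divLR // leq_divRL //; apply/andP; split; nia.
Qed.

Theorem mainTheorem11 (F : finFieldType) (s t' a kI delta : nat)
  (alpha : 'I_(s * t') -> 'I_kI -> F) (beta : 'I_t' -> 'I_a -> F)
  (gamma : 'I_delta.-1 -> F) :
  (2 <= delta)%N -> (1 <= t')%N -> (1 <= kI)%N ->
  (2 <= s)%N -> (1 <= a)%N ->
  (a * t' <= kI - delta)%N ->
  (t' * (s * kI + a) + delta - 1 <= #|F|)%N ->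
  injective (all_points alpha beta gamma) ->
  is_optimal_LRC (CF alpha beta gamma)
    (s * t' * kI) (a * t' + delta) (s * kI + a) delta.
Proof.
(* The bound on #|F| only guarantees that enough distinct points exist; their
   distinctness is the injectivity hypothesis. *)
move=> delta_ge2 t'_gt0 _ s_ge2 a_gt0 at'_le _ points_inj.
have d1_gt0 : (0 < delta.-1)%N by lia.
have m2_lt_skI : (a * t' < s * kI)%N by nia.
split; first split.
- exact: rank_CF.
- exact: is_min_dist_CF.
- exact: has_locality_CF.
rewrite (@singleton_LRC_blocks t') //; [congr Posz | | apply/andP; split]; nia.
Qed.
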